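(* Let $\mathcal{H}=W_{r_1}\otimes\dots\otimes W_{r_N}$ with $\dim W_{r_i}=r_i+1$, and let $\xi_1,\dots,\xi_N\in\mathbb{C}$. Assume the family of $R$-matrices described in the context satisfies the Yang–Baxter equation and the initial condition $R^{W_rW_r}(0)=P^{W_rW_r}$. Fix a site $n\in\{1,\dots,N\}$ and assume that the transfer matrices $t^{(r_i)}(\xi_i)$, $1\le i\le n$, are invertible operators on $\mathcal{H}$. Then for every operator $E^\alpha\in\operatorname{End}(W_{r_n})$, denoting by $E^\alpha_n$ its action on the $n$-th tensor factor of $\mathcal{H}$ and by $E^\alpha_0$ its action on the auxiliary space $W_0\simeq W_{r_n}$, \[ E_n^\alpha=\Big\{\prod_{i=1}^{n-1}t^{(r_i)}(\xi_i)\Big\}\,\operatorname{tr}_0\big(E_0^\alpha\,T^{(r_n)}_{0,1\dots N}(\xi_n)\big)\,\Big\{\prod_{i=1}^{n}t^{(r_i)}(\xi_i)\Big\}^{-1}. \]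
   Context: For finite-dimensional spaces $W_r$ (of dimension $r+1$) one is given, for every pair $(W_r,W_s)$, an operator-valued function $R^{W_rW_s}(\lambda)\in\operatorname{End}(W_r\otimes W_s)$. For spaces labelled $a,b$ in a tensor product, $R_{ab}(\lambda)$ denotes this operator acting on factors $a,b$ (identity elsewhere). Yang–Baxter equation: for any three such spaces labelled $1,2,3$ and any $\lambda_1,\lambda_2,\lambda_3$, $R_{12}(\lambda_1-\lambda_2)R_{13}(\lambda_1-\lambda_3)R_{23}(\lambda_2-\lambda_3)=R_{23}(\lambda_2-\lambda_3)R_{13}(\lambda_1-\lambda_3)R_{12}(\lambda_1-\lambda_2)$. $P^{W_rW_r}$ is the permutation (flip) operator on $W_r\otimes W_r$. For a chosen auxiliary space $W_0$ (labelled 0) isomorphic to $W_{r_n}$, the monodromy matrix is $T^{(r_n)}_{0,1\dots N}(\lambda)=R^{W_0W_{r_N}}_{0N}(\lambda-\xi_N)\cdots R^{W_0W_{r_1}}_{01}(\lambda-\xi_1)\in\operatorname{End}(W_0\otimes\mathcal{H})$, and the transfer matrix is $t^{(r_n)}(\lambda)=\operatorname{tr}_0 T^{(r_n)}_{0,1\dots N}(\lambda)\in\operatorname{End}(\mathcal{H})$, the partial trace being over $W_0$. The transfer matrices $t^{(r_i)}(\xi_i)$ mutually commute. *)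

From HB Require Import structures.
From mathcomp Require Import all_boot all_order all_algebra.
From mathcomp Require Import reals Rstruct.
From mathcomp.real_closed Require Import complex.
Set Implicit Arguments. Unset Strict Implicit. Unset Printing Implicit Defensive.
Import Order.TTheory GRing.Theory Num.Theory.
Local Open Scope ring_scope.

Definition C : numClosedFieldType := (Rdefinitions.R)[i].

(* Operators on a finite-dimensional space with basis indexed by a finType I
   are matrices 'M[C]_#|I|; mkop builds the matrix with entries f x y
   (x = output basis vector, y = input basis vector). *)
Definition mkop (I : finType) (f : I -> I -> C) : 'M[C]_#|I| :=
  \matrix_(a, b) f (enum_val a) (enum_val b).

(* W_r has basis 'I_r.+1 (dimension r+1).  An R-matrix family:
   Rm r s lam (a,b) (a',b') is the matrix entry <a b| R^{W_r W_s}(lam) |a' b'>. *)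
Definition Rfamily :=
  forall r s : nat, C -> 'I_r.+1 * 'I_s.+1 -> 'I_r.+1 * 'I_s.+1 -> C.

Definition b2C (b : bool) : C := if b then 1 else 0.

Definition YBE (Rm : Rfamily) : Prop :=
  forall (r1 r2 r3 : nat) (l1 l2 l3 : C),
  let T := ('I_r1.+1 * 'I_r2.+1 * 'I_r3.+1)%type in
  let R12 := mkop (fun x y : T =>
      @Rm r1 r2 (l1 - l2) (x.1.1, x.1.2) (y.1.1, y.1.2) * b2C (x.2 == y.2)) in
  let R13 := mkop (fun x y : T =>
      @Rm r1 r3 (l1 - l3) (x.1.1, x.2) (y.1.1, y.2) * b2C (x.1.2 == y.1.2)) in
  let R23 := mkop (fun x y : T =>
      @Rm r2 r3 (l2 - l3) (x.1.2, x.2) (y.1.2, y.2) * b2C (x.1.1 == y.1.1)) in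
  R12 *m R13 *m R23 = R23 *m R13 *m R12.

Definition initial_condition (Rm : Rfamily) : Prop :=
  forall (r : nat) (x y : 'I_r.+1 * 'I_r.+1),
    Rm r r 0 x y = b2C ((x.1 == y.2) && (x.2 == y.1)).

Section Chain.
Variables (N : nat) (r : 'I_N -> nat) (xi : 'I_N -> C) (Rm : Rfamily).

(* Basis of H = W_{r_1} (x) ... (x) W_{r_N} (sites indexed 0..N-1). *)
Definition Hidx : finType := {dffun forall i : 'I_N, 'I_(r i).+1}.

(* Basis of W_0 (x) H, with auxiliary space W_0 = W_s. *)
Definition Aidx (s : nat) : finType := ('I_s.+1 * Hidx)%type.

Definition R0k (s : nat) (k : 'I_N) (mu : C) : 'M[C]_#|Aidx s| :=
  mkop (fun x y : Aidx s =>
    @Rm s (r k) mu (x.1, x.2 k) (y.1, y.2 k) *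
    b2C [forall j : 'I_N, (j != k) ==> (x.2 j == y.2 j)]).

(* Monodromy T_{0,1..N}(lam) = R_{0N}(lam - xi_N) ... R_{01}(lam - xi_1). *)
Definition monodromy (s : nat) (lam : C) : 'M[C]_#|Aidx s| :=
  foldr (fun k acc => acc *m R0k s k (lam - xi k)) 1%:M (enum 'I_N).

Definition tr0 (s : nat) (M : 'M[C]_#|Aidx s|) : 'M[C]_#|Hidx| :=
  mkop (fun x y : Hidx =>
    \sum_(a : 'I_s.+1) M (enum_rank ((a, x) : Aidx s)) (enum_rank ((a, y) : Aidx s))).

Definition transfer (s : nat) (lam : C) : 'M[C]_#|Hidx| := tr0 (monodromy s lam).

Definition tsite (i : 'I_N) : 'M[C]_#|Hidx| := transfer (r i) (xi i).

(* prod_{i < m} t^{(r_i)}(xi_i), in increasing order of i (the factors commute). *)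
Definition tprod (m : nat) : 'M[C]_#|Hidx| :=
  foldr (fun (i : 'I_N) acc => tsite i *m acc) 1%:M [seq i : 'I_N <- enum 'I_N | (i < m)%N].

Definition E_aux (n : 'I_N) (E : 'M[C]_((r n).+1)) : 'M[C]_#|Aidx (r n)| :=
  mkop (fun x y : Aidx (r n) => E x.1 y.1 * b2C (x.2 == y.2)).

Definition E_site (n : 'I_N) (E : 'M[C]_((r n).+1)) : 'M[C]_#|Hidx| :=
  mkop (fun x y : Hidx =>
    E (x n) (y n) * b2C [forall j : 'I_N, (j != n) ==> (x j == y j)]).

End Chain.

From HB Require Import structures.
From mathcomp Require Import all_boot all_order all_algebra.
From mathcomp Require Import ring.
Set Implicit Arguments. Unset Strict Implicit. Unset Printing Implicit Defensive.
Import Order.TTheory GRing.Theory Num.Theory.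
Local Open Scope ring_scope.

(* At xi_j the factor R_{0j}(0) of the monodromy is the flip P_{0j}; pushing it through the
   other factors turns every R_{0k}(xi_j - xi_k) into R_{jk}(xi_j - xi_k) acting on the chain,
   so tr_0 (X_0 T(xi_j)) = B_j X_j A_j with B_j = R_{j,j-1} ... R_{j,1} and
   A_j = R_{j,N} ... R_{j,j+1}; in particular t(xi_j) = B_j A_j.  The Yang-Baxter equation at
   (lam, 0, lam) yields unitarity R_{ij}(lam) R_{ji}(-lam) ~ 1, so in t(xi_1) ... t(xi_n) the
   factor B_n is absorbed, up to a scalar, by the rows A_i (i < n).  What remains between E_n and
   A_n is a product of R_{ik} with i < n < k, which commutes with E_n; hence
   E_n t(xi_1) ... t(xi_n) = t(xi_1) ... t(xi_{n-1}) tr_0 (E_0 T(xi_n)). *)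

Lemma b2C_and a b : b2C (a && b) = b2C a * b2C b.
Proof. by case: a; case: b; rewrite /b2C ?mulr1 ?mulr0. Qed.

Section Kernels.
Variable I : finType.
Implicit Types (f g h : I -> I -> C) (M : 'M[C]_#|I|).

Lemma mkopE f x y : mkop f (enum_rank x) (enum_rank y) = f x y.
Proof. by rewrite mxE !enum_rankK. Qed.

Lemma eq_mkop f g : (forall x y, f x y = g x y) -> mkop f = mkop g.
Proof. by move=> fg; apply/matrixP=> a b; rewrite !mxE fg. Qed.

Lemma mkop_mx M : mkop (fun x y => M (enum_rank x) (enum_rank y)) = M.
Proof. by apply/matrixP=> a b; rewrite !mxE !enum_valK. Qed.

Lemma mulmx_mkop f g : mkop f *m mkop g = mkop (fun x y => \sum_z f x z * g z y).
Proof.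
apply/matrixP=> a b; rewrite !mxE (reindex (@enum_rank I)) /=; last first.
  by exists (@enum_val I I) => z _; rewrite ?enum_rankK ?enum_valK.
by apply: eq_bigr => z _; rewrite !mxE enum_rankK.
Qed.

Lemma mkop_eq1 : mkop (fun x y : I => b2C (x == y)) = 1%:M.
Proof. by apply/matrixP=> a b; rewrite !mxE (inj_eq enum_val_inj); case: eqP. Qed.

Lemma scalemx_mkop c f : c *: mkop f = mkop (fun x y => c * f x y).
Proof. by apply/matrixP=> a b; rewrite !mxE. Qed.

Lemma trmx_mkop f : (mkop f)^T = mkop (fun x y => f y x).
Proof. by apply/matrixP=> a b; rewrite !mxE. Qed.

Lemma sum_b2C_pinned (P : pred I) (F : I -> C) z0 :
  (forall z, P z -> z = z0) -> \sum_z b2C (P z) * F z = b2C (P z0) * F z0.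
Proof.
move=> Pz0; rewrite (eq_bigr (fun z => if z == z0 then b2C (P z0) * F z0 else 0)).
  by rewrite -big_mkcond big_pred1_eq.
move=> z _; case: eqP => [->//|nz].
by case Pz: (P z); rewrite /b2C ?mul0r //; case: nz; apply: Pz0.
Qed.

Lemma sum_pair (J : finType) (G : I * J -> C) : \sum_v G v = \sum_i \sum_j G (i, j).
Proof. by rewrite pair_bigA; apply: eq_bigr => -[]. Qed.

Lemma mulmx_graph_mkop (s : I -> I) h :
  mkop (fun x y => b2C (y == s x)) *m mkop h = mkop (fun x y => h (s x) y).
Proof.
rewrite mulmx_mkop; apply: eq_mkop => x y.
by rewrite (sum_b2C_pinned _ (z0 := s x)) ?eqxx ?mul1r // => z /eqP.
Qed.

Lemma mulmx_mkop_graph (s : I -> I) h : involutive s ->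
  mkop h *m mkop (fun x y => b2C (y == s x)) = mkop (fun x y => h x (s y)).
Proof.
move=> sK; rewrite mulmx_mkop; apply: eq_mkop => x y.
rewrite (eq_bigr (fun z => b2C (z == s y) * h x z)).
  by rewrite (sum_b2C_pinned _ (z0 := s y)) ?eqxx ?mul1r // => z /eqP.
by move=> z _; rewrite mulrC -{1}(sK y) (inj_eq (can_inj sK)) eq_sym.
Qed.

End Kernels.

Section MatrixProducts.
Variables (n : nat) (T : eqType).
Implicit Types (F G : T -> 'M[C]_n) (s : seq T).

Definition mxprod F s : 'M[C]_n := foldr (fun k acc => F k *m acc) 1%:M s.

Lemma mxprod_cat F s1 s2 : mxprod F (s1 ++ s2) = mxprod F s1 *m mxprod F s2.
Proof. by elim: s1 => [|a s IH] /=; rewrite ?mul1mx // IH mulmxA. Qed.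

Lemma mxprod_seq1 F a : mxprod F [:: a] = F a.
Proof. exact: mulmx1. Qed.

Lemma mxprod_rcons F s a : mxprod F (rcons s a) = mxprod F s *m F a.
Proof. by rewrite -cats1 mxprod_cat mxprod_seq1. Qed.

Lemma foldr_mulmx_rev F s :
  foldr (fun k acc => acc *m F k) 1%:M s = mxprod F (rev s).
Proof. by elim: s => [|a s IH] //=; rewrite IH rev_cons mxprod_rcons. Qed.

Lemma mxprod_intertwine F G s (P : 'M[C]_n) :
  (forall k, k \in s -> F k *m P = P *m G k) -> mxprod F s *m P = P *m mxprod G s.
Proof.
elim: s => [|a s IH] FG /=; first by rewrite mulmx1 mul1mx.
rewrite -mulmxA IH => [|k ks]; last by apply: FG; rewrite inE ks orbT.
by rewrite !mulmxA FG ?mem_head.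
Qed.

Lemma mxprod_comm F s (A : 'M[C]_n) :
  (forall k, k \in s -> A *m F k = F k *m A) -> A *m mxprod F s = mxprod F s *m A.
Proof. by move=> AF; symmetry; apply: mxprod_intertwine => k /AF. Qed.

Lemma unitmx_mxprod F s : (forall k, k \in s -> F k \in unitmx) -> mxprod F s \in unitmx.
Proof.
elim: s => [|a s IH] Fu; first exact: unitmx1.
by rewrite unitmx_mul Fu ?mem_head // IH // => k ks; rewrite Fu // inE ks orbT.
Qed.

End MatrixProducts.

Section SiteLists.
Variable N : nat.

Definition sites_lt (m : nat) := [seq i : 'I_N <- enum 'I_N | (i < m)%N].
Definition sites_ge (m : nat) := [seq i : 'I_N <- enum 'I_N | (m <= i)%N].

Lemma mem_sites_lt m i : (i \in sites_lt m) = (i < m)%N.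
Proof. by rewrite mem_filter mem_enum andbT. Qed.

Lemma mem_sites_ge m i : (i \in sites_ge m) = (m <= i)%N.
Proof. by rewrite mem_filter mem_enum andbT. Qed.

Lemma sites_lt0 : sites_lt 0 = [::].
Proof. by rewrite /sites_lt (@eq_filter _ _ pred0) ?filter_pred0. Qed.

Lemma map_val_sites_lt m : (m <= N)%N -> map val (sites_lt m) = iota 0 m.
Proof.
move=> mN; rewrite /sites_lt -(filter_map val (fun k => k < m)%N) val_enum_ord.
by have := filter_iota_ltn 0 mN; rewrite add0n.
Qed.

Lemma map_val_sites_ge m : (m <= N)%N -> map val (sites_ge m) = iota m (N - m).
Proof.
move=> mN; rewrite /sites_ge -(filter_map val (fun k => m <= k)%N) val_enum_ord.
rewrite -{1}(subnKC mN) iotaD filter_cat add0n (@eq_in_filter _ _ pred0); last first.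
  by move=> k; rewrite mem_iota add0n => /andP [_ km]; apply/negbTE; rewrite -ltnNge.
rewrite filter_pred0 (@eq_in_filter _ _ predT) ?filter_predT // => k.
by rewrite mem_iota => /andP [].
Qed.

Lemma iota_ltS (m : 'I_N) : iota m (N - m) = (m : nat) :: iota m.+1 (N - m.+1).
Proof. by rewrite -subnSK. Qed.

Lemma enum_ord_split (m : 'I_N) : enum 'I_N = sites_lt m ++ m :: sites_ge m.+1.
Proof.
apply: (inj_map val_inj); rewrite map_cat /= map_val_sites_lt 1?ltnW //.
rewrite map_val_sites_ge // val_enum_ord -iota_ltS -iotaD subnKC //; exact: ltnW.
Qed.

Lemma sites_ltS (m : 'I_N) : sites_lt m.+1 = rcons (sites_lt m) m.
Proof.
apply: (inj_map val_inj); rewrite map_rcons !map_val_sites_lt ?(ltnW (ltn_ord m)) //.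
by rewrite -addn1 iotaD add0n cats1.
Qed.

Lemma sites_geS (m : 'I_N) : sites_ge m = m :: sites_ge m.+1.
Proof.
apply: (inj_map val_inj); rewrite /= !map_val_sites_ge ?(ltnW (ltn_ord m)) //.
exact: iota_ltS.
Qed.

End SiteLists.

Section Locality.
Variables (N : nat) (r : 'I_N -> nat).
Local Notation H := (Hidx r).
Implicit Types (S T : {set 'I_N}) (x y z : H).

Definition agree_off S x y : bool := [forall l, (l \notin S) ==> (x l == y l)].

Lemma agree_offP S x y : reflect (forall l, l \notin S -> x l = y l) (agree_off S x y).
Proof.
apply: (iffP forallP) => h l; last by apply/implyP => lS; rewrite h.
by move=> lS; move: (h l); rewrite lS => /eqP.
Qed.

Lemma agree_off_refl S x : agree_off S x x.
Proof. exact/agree_offP. Qed.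

Lemma agree_off0 x y : agree_off set0 x y = (x == y).
Proof.
by apply/agree_offP/eqP => [h|-> //]; apply/ffunP => l; apply: h; rewrite inE.
Qed.

Lemma agree_off1 k x y :
  [forall l, (l != k) ==> (x l == y l)] = agree_off [set k] x y.
Proof. by apply: eq_forallb => l; rewrite inE. Qed.

Definition splice S x y : H := [ffun l => if l \in S then y l else x l].

Lemma spliceE S x y l : splice S x y l = if l \in S then y l else x l.
Proof. by rewrite ffunE. Qed.

Lemma agree_off_splice S T x y : [disjoint S & T] ->
  agree_off S x (splice S x y) && agree_off T (splice S x y) y = agree_off (S :|: T) x y.
Proof.
move=> dST; have -> : agree_off S x (splice S x y).
  by apply/agree_offP => l lS; rewrite spliceE (negbTE lS).
apply/agree_offP/agree_offP => h l.
- rewrite in_setU negb_or => /andP [lS lT].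
  by rewrite -(h l lT) spliceE (negbTE lS).
- move=> lT; rewrite spliceE; case: ifP => lS //.
  by apply: h; rewrite in_setU lS.
Qed.

Lemma splice_unique S T x y z : [disjoint S & T] ->
  agree_off S x z -> agree_off T z y -> z = splice S x y.
Proof.
move=> dST /agree_offP xz /agree_offP zy; apply/ffunP => l; rewrite spliceE.
case: ifP => lS; last by rewrite xz ?lS.
by rewrite zy // (disjointFr dST lS).
Qed.

Definition supported_on S (Y : 'M[C]_#|H|) :=
  exists f : H -> H -> C,
    (forall x x' y y', (forall l, l \in S -> x l = x' l) ->
        (forall l, l \in S -> y l = y' l) -> f x y = f x' y') /\
    Y = mkop (fun x y => f x y * b2C (agree_off S x y)).

(* The unique intermediate configuration is [splice S x y] on the left and
   [splice T x y] on the right; both give the same value. *)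
Lemma supported_on_comm S T (Y1 Y2 : 'M[C]_#|H|) : [disjoint S & T] ->
  supported_on S Y1 -> supported_on T Y2 -> Y1 *m Y2 = Y2 *m Y1.
Proof.
move=> dST [f1 [f1P ->]] [f2 [f2P ->]]; rewrite !mulmx_mkop; apply: eq_mkop => x y.
have dTS : [disjoint T & S] by rewrite disjoint_sym.
rewrite (eq_bigr (fun z => b2C (agree_off S x z && agree_off T z y) * (f1 x z * f2 z y)));
  last by move=> z _; rewrite b2C_and; ring.
rewrite [RHS](eq_bigr (fun z => b2C (agree_off T x z && agree_off S z y) * (f2 x z * f1 z y)));
  last by move=> z _; rewrite b2C_and; ring.
rewrite (sum_b2C_pinned _ (z0 := splice S x y)); last by move=> z /andP [] /splice_unique; apply.
rewrite (sum_b2C_pinned _ (z0 := splice T x y)); last by move=> z /andP [] /splice_unique; apply.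
rewrite !agree_off_splice // setUC; case: (boolP (agree_off _ x y)) => [/agree_offP xy|];
  last by rewrite /b2C !mul0r.
rewrite /b2C !mul1r mulrC; congr (_ * _).
- apply: f2P => l lT; rewrite !spliceE ?lT //; case: ifP => // lS.
  by rewrite (disjointFr dST lS) in lT.
- by apply: f1P => l lS; rewrite !spliceE ?lS ?(disjointFr dST lS).
Qed.

Definition upd x j (v : 'I_(r j).+1) : H :=
  [ffun l => if l == j then inord (val v) else x l].
Arguments upd : clear implicits.

Lemma upd_same x j v : upd x j v j = v.
Proof. by rewrite ffunE eqxx inord_val. Qed.

Lemma upd_other x j v l : l != j -> upd x j v l = x l.
Proof. by move=> lj; rewrite ffunE (negbTE lj). Qed.

Lemma upd_id x j : upd x j (x j) = x.
Proof. by apply/ffunP => l; case: (eqVneq l j) => [->|lj]; rewrite ?upd_same ?upd_other. Qed.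

Lemma upd_upd x j v w : upd (upd x j v) j w = upd x j w.
Proof. by apply/ffunP => l; case: (eqVneq l j) => [->|lj]; rewrite ?upd_same ?upd_other. Qed.

Lemma agree_off_updl S x y j v : j \in S -> agree_off S (upd x j v) y = agree_off S x y.
Proof.
move=> jS; apply/agree_offP/agree_offP => h l lS; rewrite -h // upd_other //;
  by apply: contraNneq lS => ->.
Qed.

Lemma agree_off_upd S x y j v w : j \notin S ->
  agree_off S (upd x j v) (upd y j w) = (v == w) && agree_off (j |: S) x y.
Proof.
move=> jS; apply/agree_offP/andP => [h|[/eqP <- /agree_offP h] l lS].
  split; first by have := h j jS; rewrite !upd_same => ->.
  apply/agree_offP => l; rewrite in_setU1 negb_or => /andP [lj lS].
  by have := h l lS; rewrite !upd_other.
case: (eqVneq l j) => [->|lj]; first by rewrite !upd_same.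
by rewrite !upd_other // h // in_setU1 negb_or lj.
Qed.

Lemma eq_upd x y j v : (upd x j v == y) = (v == y j) && agree_off [set j] x y.
Proof.
by rewrite -agree_off0 -{1}(upd_id y j) (@agree_off_upd set0) ?inE // setU0.
Qed.

Lemma b2C_agree_off_setU1 S j x z : j \notin S ->
  b2C (agree_off (j |: S) x z) = \sum_v b2C (agree_off S (upd x j v) z).
Proof.
move=> jS; rewrite (eq_bigr (fun v => b2C (agree_off S (upd x j v) z) * 1)) => [|v _];
  last by rewrite mulr1.
rewrite (sum_b2C_pinned _ (z0 := z j)) => [|v /agree_offP/(_ j jS)]; last by rewrite upd_same.
by rewrite mulr1 -{3}(upd_id z j) agree_off_upd // eqxx.
Qed.

Lemma sum_agree_off_setU1 S j x (G : H -> C) : j \notin S ->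
  \sum_z b2C (agree_off (j |: S) x z) * G z =
  \sum_v \sum_z b2C (agree_off S (upd x j v) z) * G z.
Proof.
move=> jS; rewrite exchange_big; apply: eq_bigr => z _.
by rewrite b2C_agree_off_setU1 // mulr_suml.
Qed.

Lemma sum_agree_off0 x (G : H -> C) : \sum_z b2C (agree_off set0 x z) * G z = G x.
Proof.
rewrite (sum_b2C_pinned _ (z0 := x)) ?agree_off_refl ?mul1r // => z.
by rewrite agree_off0 => /eqP.
Qed.

End Locality.
Arguments upd {N r} x j v.

Section TwoSiteOperators.
Variables (N : nat) (r : 'I_N -> nat).
Local Notation H := (Hidx r).

Definition site2 (j k : 'I_N) (f : 'I_(r j).+1 * 'I_(r k).+1 -> 'I_(r j).+1 * 'I_(r k).+1 -> C)
    : 'M[C]_#|H| :=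
  mkop (fun x y : H => f (x j, x k) (y j, y k) * b2C (agree_off [set j; k] x y)).
Arguments site2 : clear implicits.

Lemma E_site_supported n (E : 'M[C]_((r n).+1)) : supported_on [set n] (E_site E).
Proof.
exists (fun x y : H => E (x n) (y n)); split.
  by move=> x x' y y' xx' yy'; rewrite xx' ?yy' // inE.
by apply: eq_mkop => x y; rewrite agree_off1.
Qed.

Lemma site2_supported j k f : supported_on [set j; k] (site2 j k f).
Proof.
exists (fun x y : H => f (x j, x k) (y j, y k)); split => // x x' y y' xx' yy'.
by rewrite !xx' ?yy' // !inE eqxx ?orbT.
Qed.

Lemma site2_swap j k f :
  site2 j k f = site2 k j (fun (p q : 'I_(r k).+1 * 'I_(r j).+1) => f (p.2, p.1) (q.2, q.1)).
Proof. by apply: eq_mkop => x y; rewrite setUC. Qed.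

Lemma eq_site2 j k f g : (forall p q, f p q = g p q) -> site2 j k f = site2 j k g.
Proof. by move=> fg; apply: eq_mkop => x y; rewrite fg. Qed.

Lemma mulmx_site2 j k f g : j != k ->
  site2 j k f *m site2 j k g =
  site2 j k (fun p q : 'I_(r j).+1 * 'I_(r k).+1 => \sum_u f p u * g u q).
Proof.
move=> jk; rewrite mulmx_mkop; apply: eq_mkop => x y.
set G := fun z : H => f (x j, x k) (z j, z k) * g (z j, z k) (y j, y k) *
                      b2C (agree_off [set j; k] z y).
have jS : j \notin [set k] by rewrite inE.
rewrite (eq_bigr (fun z => b2C (agree_off (j |: [set k]) x z) * G z)); last first.
  by move=> z _; rewrite /G; ring.
rewrite sum_agree_off_setU1 // -(setU0 [set k]).
under eq_bigr => a _ do rewrite sum_agree_off_setU1 ?inE //.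
under eq_bigr => a _ do under eq_bigr => b _ do rewrite sum_agree_off0.
rewrite setU0 pair_bigA mulr_suml; apply: eq_bigr => -[a b] _ /=.
have kj : k != j by rewrite eq_sym.
by rewrite /G !agree_off_updl ?inE ?eqxx ?orbT // upd_same upd_other // upd_same.
Qed.

Lemma site2_scalar j k (c : C) :
  site2 j k (fun p q : 'I_(r j).+1 * 'I_(r k).+1 => c * b2C (p == q)) = c *: 1%:M.
Proof.
rewrite -mkop_eq1 scalemx_mkop; apply: eq_mkop => x y; rewrite -mulrA -b2C_and.
congr (c * b2C _); apply/andP/eqP => [[/eqP [xyj xyk] /agree_offP xy]|->].
  apply/ffunP => l; case: (eqVneq l j) => [->//|lj]; case: (eqVneq l k) => [->//|lk].
  by apply: xy; rewrite !inE negb_or lj lk.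
by rewrite eqxx agree_off_refl.
Qed.

End TwoSiteOperators.
Arguments site2 {N r} j k f.

Section Unitarity.
Variable Rm : Rfamily.
Hypothesis hinit : initial_condition Rm.

(* The entries of R^{ab}(lam) P R^{ba}(-lam) P on W_a (x) W_b. *)
Definition unitarity_kernel a b lam (p q : 'I_a.+1 * 'I_b.+1) : C :=
  \sum_u @Rm a b lam p u * @Rm b a (- lam) (u.2, u.1) (q.2, q.1).
Arguments unitarity_kernel : clear implicits.

Lemma R13_flip a b (v w : 'I_a.+1 * 'I_b.+1 * 'I_a.+1) :
  @Rm a a 0 (v.1.1, v.2) (w.1.1, w.2) * b2C (v.1.2 == w.1.2) =
  b2C (w == (v.2, v.1.2, v.1.1)).
Proof.
rewrite hinit -b2C_and; congr b2C.
case: v => [[v1 v2] v3]; case: w => [[w1 w2] w3] /=; rewrite !xpair_eqE /=.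
rewrite (eq_sym w1) (eq_sym w2) (eq_sym w3).
by case: (v3 == w1); case: (v1 == w3); case: (v2 == w2).
Qed.

(* YBE at spectral parameters (lam, 0, lam), where R_13(0) is the flip. *)
Lemma unitarity_kernel_exchange a b lam (x y : 'I_a.+1 * 'I_b.+1 * 'I_a.+1) :
  YBE Rm ->
  b2C (x.2 == y.1.1) * unitarity_kernel a b lam (x.1.1, x.1.2) (y.2, y.1.2) =
  b2C (x.1.1 == y.2) * unitarity_kernel b a (- lam) (x.1.2, x.2) (y.1.2, y.1.1).
Proof.
move=> /(_ a b a lam 0 lam) /=; rewrite subr0 subrr sub0r -!mulmxA.
under [mkop (fun v w => @Rm a a 0 _ _ * _)]eq_mkop => v w do rewrite R13_flip.
rewrite !mulmx_graph_mkop !mulmx_mkop => /matrixP /(_ (enum_rank x) (enum_rank y)).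
rewrite !mkopE /= => ybe.
have -> : b2C (x.2 == y.1.1) * unitarity_kernel a b lam (x.1.1, x.1.2) (y.2, y.1.2) =
    \sum_z @Rm a b lam (x.1.1, x.1.2) (z.1.1, z.1.2) * b2C (x.2 == z.2) *
      (@Rm b a (- lam) (z.1.2, z.1.1) (y.1.2, y.2) * b2C (z.2 == y.1.1)).
  rewrite sum_pair /unitarity_kernel mulr_sumr; apply: eq_bigr => -[u1 u2] _ /=.
  rewrite (eq_bigr (fun c => b2C ((c == x.2) && (c == y.1.1)) *
     (@Rm a b lam (x.1.1, x.1.2) (u1, u2) * @Rm b a (- lam) (u2, u1) (y.1.2, y.2)))).
    by rewrite (sum_b2C_pinned _ (z0 := x.2)) ?eqxx // => c /andP [/eqP].
  by move=> c _; rewrite b2C_and (eq_sym x.2); ring.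
rewrite ybe sum_pair sum_pair (eq_bigr (fun c => b2C ((c == x.1.1) && (c == y.2)) *
   unitarity_kernel b a (- lam) (x.1.2, x.2) (y.1.2, y.1.1))).
  by rewrite (sum_b2C_pinned _ (z0 := x.1.1)) ?eqxx // => c /andP [/eqP].
move=> c _; rewrite /unitarity_kernel opprK sum_pair mulr_sumr; apply: eq_bigr => u2 _.
by rewrite mulr_sumr; apply: eq_bigr => u3 _ /=; rewrite b2C_and (eq_sym x.1.1) mulrACA mulrC.
Qed.

Lemma unitarity_kernel_scalar a b lam (p q : 'I_a.+1 * 'I_b.+1) : YBE Rm ->
  unitarity_kernel a b lam p q =
  b2C (p == q) * unitarity_kernel a b lam (ord0, ord0) (ord0, ord0).
Proof.
move=> ybe.
have delta_first (p' q' : 'I_a.+1 * 'I_b.+1) c : unitarity_kernel a b lam p' q' =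
    b2C (p'.1 == q'.1) * unitarity_kernel b a (- lam) (p'.2, c) (q'.2, c).
  have := unitarity_kernel_exchange lam (p'.1, p'.2, c) (c, q'.2, q'.1) ybe.
  by rewrite /= eqxx mul1r; case: p' => ? ?; case: q' => ? ?.
have delta_second (p' q' : 'I_a.+1 * 'I_b.+1) c : unitarity_kernel a b lam p' q' =
    b2C (p'.2 == q'.2) * unitarity_kernel b a (- lam) (c, p'.1) (c, q'.1).
  have := unitarity_kernel_exchange (- lam) (c, p'.1, p'.2) (q'.2, q'.1, c) ybe.
  by rewrite /= eqxx mul1r opprK; case: p' => ? ?; case: q' => ? ? ->.
case: (eqVneq p q) => [<-|pq].
  (* The diagonal entries depend neither on the first nor on the second coordinate. *)
  rewrite /b2C mul1r; case: p => p1 p2.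
  rewrite (delta_first _ _ ord0) (delta_first (ord0, ord0) _ ord0) /= !eqxx !mul1r.
  have := delta_second (ord0, p2) (ord0, p2) p2; rewrite /= ?eqxx mul1r => <-.
  have := delta_second (ord0, p2) (ord0, p2) ord0; rewrite /= ?eqxx mul1r => ->.
  by have := delta_second (ord0, ord0) (ord0, ord0) ord0; rewrite /= ?eqxx mul1r.
rewrite /b2C mul0r; case: p q pq => p1 p2 [q1 q2] pq.
case: (eqVneq p1 q1) => [e1|n1]; last by rewrite (delta_first _ _ ord0) /= (negbTE n1) mul0r.
have n2 : p2 != q2 by apply: contra pq => /eqP e2; rewrite e1 e2.
by rewrite (delta_second _ _ ord0) /= (negbTE n2) mul0r.
Qed.

End Unitarity.
Arguments unitarity_kernel Rm : clear implicits.

Section AuxiliarySpace.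
Variables (N : nat) (r : 'I_N -> nat).
Local Notation H := (Hidx r).
Implicit Types (s : nat) (X Y : 'M[C]_#|H|).

Definition lift_aux s X : 'M[C]_#|Aidx r s| :=
  mkop (fun x y : Aidx r s => b2C (x.1 == y.1) * X (enum_rank x.2) (enum_rank y.2)).

Lemma lift_aux_mkop s (g : H -> H -> C) :
  lift_aux s (mkop g) = mkop (fun x y : Aidx r s => b2C (x.1 == y.1) * g x.2 y.2).
Proof. by apply: eq_mkop => x y; rewrite mkopE. Qed.

Lemma lift_aux_mul s X Y : lift_aux s (X *m Y) = lift_aux s X *m lift_aux s Y.
Proof.
rewrite -(mkop_mx X) -(mkop_mx Y) mulmx_mkop !lift_aux_mkop mulmx_mkop.
apply: eq_mkop => x y; rewrite [RHS]sum_pair.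
rewrite (eq_bigr (fun a => b2C ((a == x.1) && (a == y.1)) *
   \sum_z X (enum_rank x.2) (enum_rank z) * Y (enum_rank z) (enum_rank y.2))).
  by rewrite (sum_b2C_pinned _ (z0 := x.1)) ?eqxx // => a /andP [/eqP].
move=> a _; rewrite mulr_sumr; apply: eq_bigr => z _ /=.
by rewrite b2C_and (eq_sym x.1) mulrACA.
Qed.

Lemma lift_aux1 s : lift_aux s 1%:M = 1%:M.
Proof.
rewrite -!mkop_eq1 lift_aux_mkop; apply: eq_mkop => -[a x] [b y].
by rewrite -b2C_and xpair_eqE.
Qed.

Lemma lift_aux_mxprod s (T : eqType) (F : T -> 'M[C]_#|H|) (l : seq T) :
  lift_aux s (mxprod F l) = mxprod (fun k => lift_aux s (F k)) l.
Proof. by elim: l => [|a l IH] /=; rewrite ?lift_aux1 // lift_aux_mul IH. Qed.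

Lemma trmx_lift_aux s X : (lift_aux s X)^T = lift_aux s X^T.
Proof. by rewrite trmx_mkop; apply: eq_mkop => x y; rewrite mxE eq_sym. Qed.

Lemma tr0_mkop s (F : Aidx r s -> Aidx r s -> C) :
  tr0 (mkop F) = mkop (fun x y : H => \sum_a F (a, x) (a, y)).
Proof. by apply: eq_mkop => x y; apply: eq_bigr => a _; rewrite mkopE. Qed.

Lemma trmx_tr0 s (M : 'M[C]_#|Aidx r s|) : (tr0 M)^T = tr0 M^T.
Proof. by rewrite trmx_mkop; apply: eq_mkop => x y; apply: eq_bigr => a _; rewrite mxE. Qed.

Lemma tr0_lift_auxl s X (M : 'M[C]_#|Aidx r s|) : tr0 (lift_aux s X *m M) = X *m tr0 M.
Proof.
rewrite -(mkop_mx M) -(mkop_mx X) lift_aux_mkop !mulmx_mkop tr0_mkop.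
apply: eq_mkop => x y; rewrite [RHS](eq_bigr (fun z => \sum_a
    X (enum_rank x) (enum_rank z) * M (enum_rank (a, z)) (enum_rank (a, y)))) => [|z _];
  last by rewrite mulr_sumr; apply: eq_bigr => a _; rewrite mkopE.
rewrite [RHS]exchange_big; apply: eq_bigr => a _ /=; rewrite sum_pair.
rewrite (eq_bigr (fun b => b2C (b == a) *
    \sum_z X (enum_rank x) (enum_rank z) * M (enum_rank (b, z)) (enum_rank (a, y)))) => [|b _].
  by rewrite (sum_b2C_pinned _ (z0 := a)) ?eqxx ?mul1r // => b /eqP.
by rewrite mulr_sumr; apply: eq_bigr => z _; rewrite eq_sym mulrA.
Qed.

Lemma tr0_lift_auxr s X (M : 'M[C]_#|Aidx r s|) : tr0 (M *m lift_aux s X) = tr0 M *m X.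
Proof.
apply: trmx_inj; rewrite trmx_mul trmx_tr0 trmx_mul trmx_lift_aux.
by rewrite tr0_lift_auxl trmx_tr0.
Qed.

End AuxiliarySpace.

Section AuxiliaryFlip.
Variables (N : nat) (r : 'I_N -> nat).
Local Notation H := (Hidx r).

Definition flip_idx (j : 'I_N) (x : Aidx r (r j)) : Aidx r (r j) := (x.2 j, upd x.2 j x.1).
Arguments flip_idx : clear implicits.

Lemma flip_idxK j : involutive (flip_idx j).
Proof. by case=> a x; rewrite /flip_idx /= upd_upd upd_same upd_id. Qed.

Definition flip_mx j : 'M[C]_#|Aidx r (r j)| := mkop (fun x y => b2C (y == flip_idx j x)).

Lemma flip_mxK j : flip_mx j *m flip_mx j = 1%:M.
Proof.
rewrite mulmx_graph_mkop -mkop_eq1; apply: eq_mkop => x y.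
by rewrite flip_idxK eq_sym.
Qed.

Lemma flip_mx_conj j (F : Aidx r (r j) -> Aidx r (r j) -> C) :
  flip_mx j *m mkop F *m flip_mx j = mkop (fun x y => F (flip_idx j x) (flip_idx j y)).
Proof. by rewrite mulmx_graph_mkop mulmx_mkop_graph //; exact: flip_idxK. Qed.

Lemma flip_mx_conj_mulr j Z W :
  flip_mx j *m Z *m flip_mx j = W -> Z *m flip_mx j = flip_mx j *m W.
Proof. by move=> <-; rewrite !mulmxA flip_mxK mul1mx. Qed.

Lemma flip_mx_conj_mull j Z W :
  flip_mx j *m Z *m flip_mx j = W -> flip_mx j *m Z = W *m flip_mx j.
Proof. by move=> <-; rewrite -mulmxA flip_mxK mulmx1. Qed.

Lemma tr0_flip_mx j : tr0 (flip_mx j) = 1%:M.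
Proof.
rewrite tr0_mkop -mkop_eq1; apply: eq_mkop => x y.
rewrite (eq_bigr (fun a => b2C ((a == x j) && (y == upd x j a)) * 1)) => [|a _]; last first.
  by rewrite mulr1 xpair_eqE.
rewrite (sum_b2C_pinned _ (z0 := x j)) => [|a /andP [/eqP]//].
by rewrite eqxx upd_id mulr1 eq_sym.
Qed.

Lemma flip_mx_conj_E_aux n (E : 'M[C]_((r n).+1)) :
  flip_mx n *m E_aux E *m flip_mx n = lift_aux (r n) (E_site E).
Proof.
rewrite flip_mx_conj lift_aux_mkop; apply: eq_mkop => -[a x] [b y] /=.
rewrite -agree_off0 (@agree_off_upd _ _ set0) ?inE // setU0 agree_off1 b2C_and.
by rewrite mulrCA.
Qed.

Variable Rm : Rfamily.
Hypothesis hinit : initial_condition Rm.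

Lemma R0k_kernel s k mu : R0k r Rm s k mu =
  mkop (fun x y : Aidx r s =>
    @Rm s (r k) mu (x.1, x.2 k) (y.1, y.2 k) * b2C (agree_off [set k] x.2 y.2)).
Proof. by apply: eq_mkop => x y; rewrite agree_off1. Qed.

Lemma R0k0_flip j : R0k r Rm (r j) j 0 = flip_mx j.
Proof.
rewrite R0k_kernel; apply: eq_mkop => -[a x] [b y] /=.
rewrite hinit -b2C_and /flip_idx xpair_eqE /=; congr b2C.
by rewrite (eq_sym y) eq_upd (eq_sym b) andbCA andbA.
Qed.

Lemma flip_mx_conj_R0k j k mu : k != j ->
  flip_mx j *m R0k r Rm (r j) k mu *m flip_mx j = lift_aux (r j) (site2 j k (@Rm (r j) (r k) mu)).
Proof.
move=> kj; rewrite R0k_kernel flip_mx_conj lift_aux_mkop; apply: eq_mkop => -[a x] [b y] /=.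
have jk : j \notin [set k] by rewrite inE eq_sym.
by rewrite !upd_other // agree_off_upd // b2C_and mulrCA.
Qed.

(* As in [supported_on_comm], with the auxiliary index carried along unchanged. *)
Lemma lift_aux_R0k_comm S (Y : 'M[C]_#|H|) s k mu : supported_on S Y -> k \notin S ->
  lift_aux s Y *m R0k r Rm s k mu = R0k r Rm s k mu *m lift_aux s Y.
Proof.
move=> [f [fP ->]] kS; rewrite lift_aux_mkop R0k_kernel !mulmx_mkop; apply: eq_mkop => x y.
have dSk : [disjoint S & [set k]] by rewrite disjoint_sym disjoints1.
have dkS : [disjoint [set k] & S] by rewrite disjoints1.
rewrite (eq_bigr (fun z : Aidx r s =>
    b2C ((z.1 == x.1) && (agree_off S x.2 z.2 && agree_off [set k] z.2 y.2)) *
    (f x.2 z.2 * @Rm s (r k) mu (z.1, z.2 k) (y.1, y.2 k)))); last first.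
  by move=> z _; rewrite !b2C_and (eq_sym z.1); ring.
rewrite (sum_b2C_pinned _ (z0 := (x.1, splice S x.2 y.2))); last first.
  by case=> a z /andP [/eqP /= -> /andP [xz zy]]; rewrite -(splice_unique dSk xz zy).
rewrite [RHS](eq_bigr (fun z : Aidx r s =>
    b2C ((z.1 == y.1) && (agree_off [set k] x.2 z.2 && agree_off S z.2 y.2)) *
    (@Rm s (r k) mu (x.1, x.2 k) (z.1, z.2 k) * f z.2 y.2))); last first.
  by move=> z _; rewrite !b2C_and (eq_sym z.1); ring.
rewrite (sum_b2C_pinned _ (z0 := (y.1, splice [set k] x.2 y.2))); last first.
  by case=> a z /andP [/eqP /= -> /andP [xz zy]]; rewrite -(splice_unique dkS xz zy).
rewrite /= !eqxx /= !agree_off_splice // setUC !spliceE (negbTE kS) inE eqxx.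
rewrite (mulrC (f _ _)) (fP _ (splice [set k] x.2 y.2) _ y.2) // => l lS.
  by rewrite spliceE inE; case: eqP => // lk; rewrite -lk lS in kS.
by rewrite spliceE lS.
Qed.

End AuxiliaryFlip.
Arguments flip_mx {N r} j.

Section MonodromyAtInhomogeneities.
Variables (N : nat) (r : 'I_N -> nat) (xi : 'I_N -> C) (Rm : Rfamily).
Hypothesis hinit : initial_condition Rm.
Local Notation H := (Hidx r).

Definition Rxi (j k : 'I_N) : 'M[C]_#|H| := site2 j k (@Rm (r j) (r k) (xi j - xi k)).

(* With 0-based sites: Rrow j c = R_{j,N-1} ... R_{j,c} and Rrow_lt j = R_{j,j-1} ... R_{j,0}. *)
Definition Rrow (j : 'I_N) (c : nat) := mxprod (Rxi j) (rev (sites_ge N c)).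
Definition Rrow_lt (j : 'I_N) := mxprod (Rxi j) (rev (sites_lt N j)).

Local Notation R0 j := (fun k => R0k r Rm (r j) k (xi j - xi k)).

Lemma monodromy_at_xi j : monodromy r xi Rm (r j) (xi j) =
  mxprod (R0 j) (rev (sites_ge N j.+1)) *m flip_mx j *m mxprod (R0 j) (rev (sites_lt N j)).
Proof.
rewrite /monodromy foldr_mulmx_rev (enum_ord_split j) rev_cat rev_cons.
by rewrite -cats1 !mxprod_cat mxprod_seq1 subrr R0k0_flip.
Qed.

Lemma Rrow_R0_comm (j k : 'I_N) c : (k < j)%N -> (j < c)%N ->
  lift_aux (r j) (Rrow j c) *m R0k r Rm (r j) k (xi j - xi k) =
  R0k r Rm (r j) k (xi j - xi k) *m lift_aux (r j) (Rrow j c).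
Proof.
move=> kj jc; rewrite lift_aux_mxprod; apply/esym/mxprod_comm => l.
rewrite mem_rev mem_sites_ge => cl.
apply/esym; apply: (lift_aux_R0k_comm Rm _ _ (site2_supported _)).
by rewrite !inE negb_or !neq_ltn kj (ltn_trans kj (leq_trans jc cl)).
Qed.

Lemma tr0_mul_monodromy j (Z : 'M[C]_#|Aidx r (r j)|) (W : 'M[C]_#|H|) :
  supported_on [set j] W -> flip_mx j *m Z *m flip_mx j = lift_aux (r j) W ->
  tr0 (Z *m monodromy r xi Rm (r j) (xi j)) = Rrow_lt j *m W *m Rrow j j.+1.
Proof.
move=> Wj /flip_mx_conj_mulr ZW.
have hi : mxprod (R0 j) (rev (sites_ge N j.+1)) *m flip_mx j =
    flip_mx j *m lift_aux (r j) (Rrow j j.+1).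
  rewrite lift_aux_mxprod; apply: mxprod_intertwine => k; rewrite mem_rev mem_sites_ge => jk.
  by apply/flip_mx_conj_mulr/flip_mx_conj_R0k; rewrite neq_ltn jk orbT.
have lo : flip_mx j *m mxprod (R0 j) (rev (sites_lt N j)) =
    lift_aux (r j) (Rrow_lt j) *m flip_mx j.
  rewrite lift_aux_mxprod; apply/esym/mxprod_intertwine => k.
  rewrite mem_rev mem_sites_lt => kj; apply/esym/flip_mx_conj_mull/flip_mx_conj_R0k.
  by rewrite neq_ltn kj.
have comm : lift_aux (r j) (W *m Rrow j j.+1) *m mxprod (R0 j) (rev (sites_lt N j)) =
    mxprod (R0 j) (rev (sites_lt N j)) *m lift_aux (r j) (W *m Rrow j j.+1).
  apply: mxprod_comm => k; rewrite mem_rev mem_sites_lt => kj /=.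
  rewrite lift_aux_mul -mulmxA Rrow_R0_comm // !mulmxA (lift_aux_R0k_comm Rm _ _ Wj) //.
  by rewrite inE neq_ltn kj.
rewrite monodromy_at_xi !mulmxA -(mulmxA Z) hi mulmxA ZW -(mulmxA (flip_mx j)).
rewrite -lift_aux_mul -mulmxA comm mulmxA lo tr0_lift_auxr tr0_lift_auxl tr0_flip_mx.
by rewrite mulmx1 mulmxA.
Qed.

Lemma supported_on1 j : supported_on [set j] (1%:M : 'M[C]_#|H|).
Proof.
exists (fun x y : H => b2C (x j == y j)); split.
  by move=> x x' y y' xx' yy'; rewrite xx' ?yy' // inE.
rewrite -mkop_eq1; apply: eq_mkop => x y.
by rewrite -b2C_and -{1}(upd_id x j) eq_upd eq_sym.
Qed.

Lemma tsite_factor j : tsite r xi Rm j = Rrow_lt j *m Rrow j j.+1.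
Proof.
rewrite /tsite /transfer -[monodromy _ _ _ _ _]mul1mx (tr0_mul_monodromy (supported_on1 j)).
  by rewrite mulmx1.
by rewrite mulmx1 flip_mxK lift_aux1.
Qed.

Lemma tr0_E_aux_monodromy n (E : 'M[C]_((r n).+1)) :
  tr0 (E_aux E *m monodromy r xi Rm (r n) (xi n)) = Rrow_lt n *m E_site E *m Rrow n n.+1.
Proof. exact/tr0_mul_monodromy/flip_mx_conj_E_aux/E_site_supported. Qed.

End MonodromyAtInhomogeneities.

Section TransferProducts.
Variables (N : nat) (r : 'I_N -> nat) (xi : 'I_N -> C) (Rm : Rfamily).
Hypotheses (hYBE : YBE Rm) (hinit : initial_condition Rm).
Local Notation Rxi := (Rxi r xi Rm).
Local Notation Rrow := (Rrow r xi Rm).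

Lemma Rxi_comm i j k l : i != k -> i != l -> j != k -> j != l ->
  Rxi i j *m Rxi k l = Rxi k l *m Rxi i j.
Proof.
move=> ik il jk jl; apply: supported_on_comm; try exact: site2_supported.
by rewrite disjoints_subset subUset !sub1set !inE !negb_or ik il jk jl.
Qed.

Lemma Rxi_unitarity j k : j != k ->
  Rxi j k *m Rxi k j =
  unitarity_kernel Rm (r j) (r k) (xi j - xi k) (ord0, ord0) (ord0, ord0) *: 1%:M.
Proof.
move=> jk; rewrite /Rxi [site2 k j _]site2_swap mulmx_site2 // -(@site2_scalar _ r j k).
apply: eq_site2 => p q; rewrite mulrC -(unitarity_kernel_scalar hinit _ p q hYBE).
by rewrite /unitarity_kernel opprB.
Qed.

Lemma tprodE p : tprod r xi Rm p = mxprod (tsite r xi Rm) (sites_lt N p).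
Proof. by []. Qed.

Definition rows_prod (c p : nat) := mxprod (fun i => Rrow i c) (sites_lt N p).

Lemma Rrow_comm_prefix (i m : 'I_N) p : (p <= i)%N -> (i < m)%N ->
  Rrow i m.+1 *m mxprod (Rxi m) (rev (sites_lt N p)) =
  mxprod (Rxi m) (rev (sites_lt N p)) *m Rrow i m.+1.
Proof.
move=> pi im; apply/esym/mxprod_comm => k; rewrite mem_rev mem_sites_ge => mk.
apply/esym/mxprod_comm => l; rewrite mem_rev mem_sites_lt => lp.
have lk : (l < k)%N by rewrite (ltn_trans lp (leq_ltn_trans pi (ltn_trans im mk))).
by apply: Rxi_comm; rewrite neq_ltn ?im ?mk ?lk ?(leq_trans lp pi) ?(ltn_trans im mk) ?orbT.
Qed.

(* By unitarity R_{im} R_{mi} ~ 1, the factors R_{mi} (i < p) are absorbed, up to a scalar,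
   by the last factors R_{im} of the rows. *)
Lemma rows_prod_absorb (m : 'I_N) p : (p <= m)%N ->
  exists d : C, rows_prod m p *m mxprod (Rxi m) (rev (sites_lt N p)) = d *: rows_prod m.+1 p.
Proof.
elim: p => [|p IH] pm; first by exists 1; rewrite /rows_prod sites_lt0 mulmx1 scale1r.
have [d IHd] := IH (ltnW pm).
pose i : 'I_N := Ordinal (ltn_trans pm (ltn_ord m)).
have im : i != m by rewrite neq_ltn pm.
have Rrow_split : Rrow i m = Rrow i m.+1 *m Rxi i m.
  by rewrite /Rrow (sites_geS m) rev_cons mxprod_rcons.
exists (unitarity_kernel Rm (r i) (r m) (xi i - xi m) (ord0, ord0) (ord0, ord0) * d).
rewrite /rows_prod (sites_ltS i) rev_rcons !mxprod_rcons -/(rows_prod m p) Rrow_split /=.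
rewrite -!mulmxA (mulmxA (Rxi i m)) Rxi_unitarity // -scalemxAl mul1mx -!scalemxAr.
by rewrite Rrow_comm_prefix // mulmxA IHd -scalemxAl scalerA.
Qed.

Lemma tprod_rows_prod p : (p <= N)%N -> exists g : C, tprod r xi Rm p = g *: rows_prod p p.
Proof.
elim: p => [|p IH] pN; first by exists 1; rewrite scale1r tprodE /rows_prod sites_lt0.
have [g IHg] := IH (ltnW pN).
pose i : 'I_N := Ordinal pN.
have [d Hd] := @rows_prod_absorb i p (leqnn p).
exists (g * d).
rewrite tprodE (sites_ltS i) mxprod_rcons -tprodE IHg (tsite_factor _ _ hinit) mulmxA.
by rewrite -scalemxAl Hd scalerA -scalemxAl /rows_prod (sites_ltS i) mxprod_rcons.
Qed.

Lemma E_site_rows_prod_comm (n : 'I_N) (E : 'M[C]_((r n).+1)) :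
  E_site E *m rows_prod n.+1 n = rows_prod n.+1 n *m E_site E.
Proof.
apply: mxprod_comm => i; rewrite mem_sites_lt => ilt.
apply: mxprod_comm => k; rewrite mem_rev mem_sites_ge => nk.
apply: (supported_on_comm _ (E_site_supported E) (site2_supported _)).
by rewrite disjoints1 !inE negb_or !neq_ltn ilt nk orbT.
Qed.

Lemma E_site_tprod (n : 'I_N) (E : 'M[C]_((r n).+1)) :
  E_site E *m tprod r xi Rm n.+1 =
  tprod r xi Rm n *m tr0 (E_aux E *m monodromy r xi Rm (r n) (xi n)).
Proof.
have [g Hg] := tprod_rows_prod (ltnW (ltn_ord n)).
have [d Hd] := rows_prod_absorb (leqnn n).
rewrite [tprod _ _ _ n.+1]tprodE sites_ltS mxprod_rcons -tprodE (tr0_E_aux_monodromy _ hinit).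
rewrite (tsite_factor _ _ hinit) Hg !mulmxA -!scalemxAr -!scalemxAl -(mulmxA (E_site E)).
by rewrite Hd -!scalemxAr -!scalemxAl E_site_rows_prod_comm.
Qed.

End TransferProducts.

Theorem proposition3p1 (N : nat) (r : 'I_N -> nat) (xi : 'I_N -> C)
    (Rm : Rfamily) (hYBE : YBE Rm) (hinit : initial_condition Rm)
    (n : 'I_N)
    (hinv : forall i : 'I_N, (i <= n)%N -> tsite r xi Rm i \in unitmx)
    (E : 'M[C]_((r n).+1)) :
  E_site E =
    tprod r xi Rm n *m tr0 (E_aux E *m monodromy r xi Rm (r n) (xi n))
    *m invmx (tprod r xi Rm n.+1).
Proof.
have tprod_unit : tprod r xi Rm n.+1 \in unitmx.
  by apply: unitmx_mxprod => i; rewrite mem_sites_lt ltnS; apply: hinv.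
by rewrite -(E_site_tprod xi hYBE hinit) mulmxK.
Qed.
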